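(* Suppose that for every binary system $(S,\star)$ and every nonempty compact convex subset $C\subseteq\Pr(S)$ closed under $\star$ there is $\mu\in C$ with $\mu\star\mu=\mu$. Then: for every $c:\mathbb{T}\to[0,1]$ and $\epsilon>0$ there exist $r\in[0,1]$ and an increasing sequence $\mu_i$ ($i\in\omega$) of elements of $\mathbb{A}$ such that whenever $t\in\mathbb{T}_m$ and $i_0<\dots<i_{m-1}$ (natural numbers) is admissible for $t$, we have $|c(t(\mu_{i_0},\dots,\mu_{i_{m-1}}))-r|<\epsilon$.
   Context: For a set $S$, $\Pr(S)$ is the set of finitely additive probability measures on $S$, identified with positive linear functionals $f$ on $\ell^\infty(S)$ with $f(\bar1)=1$, with the weak* topology. For a binary operation $\star$ on $S$ and $\mu,\nu\in\Pr(S)$, $(\mu\star\nu)(f)=\int\int f(x\star y)\,d\nu(y)\,d\mu(x)$. For $a,b\subseteq(0,1]$ put $a\,\hat{}\,b=\tfrac12 a\cup\tfrac12(b+1)$; $\mathbb{T}$ is the set generated from $\mathbf{1}=\{1\}$ by $\hat{}$ (free binary system on one generator; each $t\neq\mathbf1$ is uniquely $a\,\hat{}\,b$). $\#(t)$ is the cardinality of $t$, $\mathbb{T}_n=\{t:\#(t)=n\}$, $\mathbb{A}_n$ is the set of probability measures on $\mathbb{T}_n$, $\mathbb{A}$ the disjoint union of the $\mathbb{A}_n$, $\#(\nu)=n$ for $\nu\in\mathbb{A}_n$; a sequence $\mu_i$ in $\mathbb{A}$ is increasing if $i<j$ implies $\#(\mu_i)<\#(\mu_j)$. $c$ is extended linearly: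 $c(\nu)=\sum_t\nu(\{t\})c(t)$. Substitution: for $t\in\mathbb{T}_m$ and $u_0,\dots,u_{m-1}\in\mathbb{T}$, $\mathbf1(u_0)=u_0$ and $(a\,\hat{}\,b)(u_0,\dots,u_{m-1})=a(u_0,\dots,u_{p-1})\,\hat{}\,b(u_p,\dots,u_{m-1})$ with $p=\#(a)$ (i.e. $u_i$ replaces the $i$-th occurrence of $\mathbf1$ in the term $t$); this extends $m$-multilinearly to a map $\mathbb{A}^m\to\mathbb{A}$. For $t\in\mathbb{T}$ and $k<\#(t)$ define $t_k$ recursively: $t_k=\mathbf1$ if $t=\mathbf1$, $k=0$; $t_k=a_k\,\hat{}\,\mathbf1$ if $t=a\,\hat{}\,b$ and $k<\#(a)$; $t_k=a\,\hat{}\,b_{k-\#(a)}$ if $t=a\,\hat{}\,b$ and $\#(a)\le k<\#(t)$. Let $l_k(t)=\#(t_k)-2$. For $t\in\mathbb{T}_m$, an increasing sequence $i_0<\dots<i_{m-1}$ is admissible for $t$ if $l_k(t)\le i_k$ for all $k<m$. *)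

From HB Require Import structures.
From mathcomp Require Import all_boot all_order all_algebra.
From mathcomp Require Import all_classical all_reals all_analysis.
Set Implicit Arguments. Unset Strict Implicit. Unset Printing Implicit Defensive.
Import Order.TTheory GRing.Theory Num.Theory.
Import numFieldTopology.Exports numFieldNormedType.Exports.
Local Open Scope classical_set_scope.
Local Open Scope ring_scope.

Section Pr.
Variable R : realType.
Variable S : Type.

Definition bnd (f : S -> R) : Prop := exists M : R, forall x, `|f x| <= M.

(* Pr(S): positive linear functionals on l^oo(S) with value 1 at the constant
   function 1.  A functional is represented as a map (S -> R) -> R that is
   (by convention) 0 on unbounded functions, so that the weak* topology is
   the subspace topology of the product (pointwise) topology on
   (S -> R) -> R. *)
Definition is_prob (mu : (S -> R) -> R) : Prop :=
  [/\ (forall f, ~ bnd f -> mu f = 0),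
      (forall (a : R) f g, bnd f -> bnd g ->
          mu (fun x => a * f x + g x) = a * mu f + mu g),
      (forall f, bnd f -> (forall x, 0 <= f x) -> 0 <= mu f)
    & mu (fun _ => 1) = 1].

Definition bconv (op : S -> S -> S) (mu nu : (S -> R) -> R) : (S -> R) -> R :=
  fun f => if `[< bnd f >] then mu (fun x => nu (fun y => f (op x y))) else 0.

Definition wconvex (C : set ((S -> R) -> R)) : Prop :=
  forall mu nu (t : R), C mu -> C nu -> 0 <= t <= 1 ->
    C (fun f => t * mu f + (1 - t) * nu f).

Definition wcompact (C : set ((S -> R) -> R)) : Prop :=
  @compact (prod_topology (fun _ : S -> R => (R : topologicalType))) C.

End Pr.

Inductive tree : Type := Leaf : tree | Node : tree -> tree -> tree.

Fixpoint tree_eqb (s t : tree) : bool :=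
  match s, t with
  | Leaf, Leaf => true
  | Node a b, Node c d => tree_eqb a c && tree_eqb b d
  | _, _ => false
  end.

Lemma tree_eqP : Equality.axiom tree_eqb.
Proof.
move=> s; elim: s => [|a IHa b IHb] t; case: t => [|c d] /=; try by constructor.
case: (IHa c) => [<-|Hac]; last by constructor; case.
case: (IHb d) => [<-|Hbd]; last by constructor; case.
by constructor.
Qed.

HB.instance Definition _ := hasDecEq.Build tree tree_eqP.

Fixpoint leaves (t : tree) : nat :=
  match t with Leaf => 1%N | Node a b => (leaves a + leaves b)%N end.

Fixpoint subst (t : tree) (us : seq tree) : tree :=
  match t with
  | Leaf => head Leaf us
  | Node a b => Node (subst a (take (leaves a) us)) (subst b (drop (leaves a) us))
  end.

Fixpoint tk (t : tree) (k : nat) : tree :=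
  match t with
  | Leaf => Leaf
  | Node a b => if (k < leaves a)%N then Node (tk a k) Leaf
                else Node a (tk b (k - leaves a))
  end.

Definition lk (t : tree) (k : nat) : int := (leaves (tk t k))%:Z - 2%:Z.

Definition admissible (t : tree) (ix : seq nat) : Prop :=
  [/\ size ix = leaves t, sorted ltn ix &
      forall k, (k < leaves t)%N -> lk t k <= (nth 0%N ix k)%:Z].

Section Ameas.
Variable R : realType.

(* A finitely supported measure ix represented as a formal combination
   sum_j w_j delta_{t_j}, given by the list of pairs (t_j, w_j). *)
Definition fmeas := seq (tree * R).

Definition inA (n : nat) (nu : fmeas) : Prop :=
  [/\ forall p, p \in nu -> leaves p.1 = n,
      forall p, p \in nu -> 0 <= p.2
    & \sum_(p <- nu) p.2 = 1].

Definition cA (c : tree -> R) (nu : fmeas) : R := \sum_(p <- nu) p.2 * c p.1.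

Fixpoint choices (ls : seq fmeas) : seq (seq tree * R) :=
  match ls with
  | [::] => [:: ([::], 1)]
  | l :: ls' => [seq (u.1 :: q.1, u.2 * q.2) | u <- l, q <- choices ls']
  end.

Definition tsubst (t : tree) (ls : seq fmeas) : fmeas :=
  [seq (subst t q.1, q.2) | q <- choices ls].

End Ameas.

(* An idempotent ultrafilter [p] on [(nat, +)] containing the cofinite sets is
   obtained by the Ellis-Numakura argument, closed subsets of βℕ being encoded by
   filters.  The weak* limits along [p] of measures [rho_n \in A_n] form a
   nonempty compact convex subset of Pr(T), closed under convolution because
   [p + p = p]; the hypothesis gives an idempotent [mu] in it, and [r = mu c].
   Idempotence means that once the first [k + 1] leaves of [t] are fixed, the
   [mu]-integral of [c] over the remaining leaves of [t] only depends on [t_k].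
   So if [mu_i \in A_(n_i)] is chosen along [p] to approximate [mu] within
   [eps / 2 ^ (i + 1)] on the finitely many test functions built from trees with
   at most [i + 2] leaves and from the atoms of [mu_0, ..., mu_(i-1)], then for
   admissible indices [i_k] each [mu_(i_k)] may replace [mu] at the [k]-th leaf,
   and the errors add up to less than [eps]. *)

From Stdlib Require List.
From HB Require Import structures.
From mathcomp Require Import all_boot all_order all_algebra.
From mathcomp Require Import all_classical all_reals all_analysis.
From mathcomp Require Import ring lra zify.
Import Order.TTheory GRing.Theory Num.Theory.
Import numFieldTopology.Exports numFieldNormedType.Exports.
Set Implicit Arguments. Unset Strict Implicit. Unset Printing Implicit Defensive.
Local Open Scope classical_set_scope.

Lemma proper_filter_setC T (F : set_system T) (A : set T) :
  ProperFilter F -> F A -> ~ F (~` A).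
Proof.
by move=> FF FA FnA; apply: (filter_not_empty F); rewrite -(setICr A); apply: filterI.
Qed.

Lemma ultra_filter_setVsetC T (F : set_system T) :
  ProperFilter F -> (forall A, F A \/ F (~` A)) -> UltraFilter F.
Proof.
move=> FF FVC; split=> // G GF sFG; apply/funext => A; apply/propext; split; last exact: sFG.
by move=> GA; case: (FVC A) => // /sFG /(proper_filter_setC GF GA).
Qed.

(** * Idempotent ultrafilters on [nat] *)

Definition shiftset (q : set_system nat) (A : set nat) : set nat :=
  [set n | q [set m | A (n + m)%N]].

Definition ultra_add (p q : set_system nat) : set_system nat :=
  [set A | p (shiftset q A)].

Lemma shiftsetT q : Filter q -> shiftset q setT = setT.
Proof. by move=> qF; apply/seteqP; split=> // n _; apply: filterT. Qed.

Lemma shiftsetS q A B : Filter q -> A `<=` B -> shiftset q A `<=` shiftset q B.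
Proof. by move=> qF AB n; apply: filterS => m /AB. Qed.

Lemma shiftsetI q A B : Filter q ->
  shiftset q A `&` shiftset q B `<=` shiftset q (A `&` B).
Proof. by move=> qF n [qA qB]; apply: filterI qA qB. Qed.

Lemma shiftsetC q A : UltraFilter q -> shiftset q (~` A) = ~` shiftset q A.
Proof.
move=> qU; apply/seteqP; split=> n /=.
  by move=> qnA /(proper_filter_setC ultra_proper); apply.
by case: (in_ultra_setVsetC [set m | A (n + m)%N] qU).
Qed.

Lemma ultra_add_ultra p q :
  UltraFilter p -> UltraFilter q -> UltraFilter (ultra_add p q).
Proof.
move=> pU qU; apply: ultra_filter_setVsetC => [|A]; last first.
  by rewrite /ultra_add /= shiftsetC //; exact: in_ultra_setVsetC.
apply: Build_ProperFilter; first by rewrite /ultra_add /= => /filter_ex[n /filter_ex[m]].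
split.
- by rewrite /ultra_add /= shiftsetT; exact: filterT.
- move=> A B; rewrite /ultra_add /= => pA pB.
  by apply: filterS (filterI pA pB); exact: shiftsetI.
- by move=> A B AB; rewrite /ultra_add /=; apply: filterS; exact: shiftsetS.
Qed.

Lemma ultra_addA p q r : ultra_add (ultra_add p q) r = ultra_add p (ultra_add q r).
Proof.
apply/funext => A; rewrite /ultra_add /shiftset /=; congr (p _).
apply/funext => k; congr (q _); apply/funext => n; congr (r _).
by apply/funext => m; rewrite /= addnA.
Qed.

Lemma eventually_ultra_add p q :
  Filter p -> \oo `<=` q -> \oo `<=` ultra_add p q.
Proof.
move=> pF oq A [N _ NA]; rewrite /ultra_add /=; apply: filterE => n.
by apply/oq; exists N => // m /= Nm; apply: NA; rewrite /= (leq_trans Nm) ?leq_addl.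
Qed.

Definition ultra_ext (F : set_system nat) : set (set_system nat) :=
  [set q | UltraFilter q /\ F `<=` q].

(* [F] stands for the closed subset [ultra_ext F] of βℕ \ ℕ, which is required
   to be a subsemigroup. *)
Definition semigroup_filter (F : set_system nat) : Prop :=
  [/\ ProperFilter F, \oo `<=` F &
      forall q r, ultra_ext F q -> ultra_ext F r -> F `<=` ultra_add q r].

Lemma semigroup_filter_eventually : semigroup_filter \oo.
Proof.
split=> [|//|q r [qU _] [_ rF]]; first exact: eventually_filter.
exact: eventually_ultra_add.
Qed.

Lemma semigroup_filter_bigcup (A : set (set_system nat)) :
  A !=set0 -> A `<=` semigroup_filter -> total_on A subset ->
  semigroup_filter (\bigcup_(F in A) F).
Proof.
move=> [G AG] Asg Atot; have [GF Goo _] := Asg G AG.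
split.
- apply: Build_ProperFilter; first by move=> [F /Asg[FF _ _]]; apply: filter_not_empty.
  split; first by exists G => //; apply: filterT.
  + move=> X Y [F1 A1 F1X] [F2 A2 F2Y].
    have [F1F2|F2F1] := Atot _ _ A1 A2.
      by exists F2 => //; have [? _ _] := Asg F2 A2; apply: filterI => //; apply: F1F2.
    by exists F1 => //; have [? _ _] := Asg F1 A1; apply: filterI => //; apply: F2F1.
  + by move=> X Y XY [F AF FX]; exists F => //; have [? _ _] := Asg F AF; apply: filterS FX.
- by move=> X /Goo GX; exists G.
- move=> q r [qU Aq] [rU Ar] X [F AF FX]; have [_ _ Fsg] := Asg F AF.
  by apply: Fsg FX; split=> // Y FY; [apply: Aq | apply: Ar]; exists F.
Qed.

Lemma maximal_semigroup_filter : exists F, semigroup_filter F /\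
  forall G, semigroup_filter G -> F `<=` G -> G `<=` F.
Proof.
pose T := {F : set_system nat | semigroup_filter F}.
pose le (F G : T) := `[< sval F `<=` sval G >].
have [F Fmax] : exists F : T, premaximal le F.
  apply: (ZL_preorder (exist _ _ semigroup_filter_eventually)).
  - by move=> F; apply/asboolP.
  - by move=> F G H /asboolP FG /asboolP GH; apply/asboolP; apply: subset_trans GH.
  move=> A Atot; have [[G AG] | A0] := pselect (A !=set0); last first.
    by exists (exist _ _ semigroup_filter_eventually) => G AG; case: A0; exists G.
  have Usg : semigroup_filter (\bigcup_(F in sval @` A) F).
    apply: semigroup_filter_bigcup; first by exists (sval G), G.
      by move=> _ [H _ <-]; exact: svalP.
    move=> _ _ [H1 A1 <-] [H2 A2 <-].
    by have [/asboolP|/asboolP] := Atot _ _ A1 A2; [left|right].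
  by exists (exist _ _ Usg) => H AH; apply/asboolP => X HX; exists (sval H).
exists (sval F); split; first exact: svalP.
by move=> G Gsg FG; apply/asboolP/(Fmax (exist _ G Gsg))/asboolP.
Qed.

Lemma proper_filter_bigcap T I (D : set I) (Fs : I -> set_system T) :
  D !=set0 -> (forall i, D i -> ProperFilter (Fs i)) ->
  ProperFilter [set A | forall i, D i -> Fs i A].
Proof.
move=> [i0 Di0] DF; apply: Build_ProperFilter.
  by move=> /(_ i0 Di0); have := DF i0 Di0; apply: filter_not_empty.
split.
- by move=> i /DF iF; apply: filterT.
- by move=> A B FA FB i Di; have iF := DF i Di; apply: filterI; [apply: FA|apply: FB].
- by move=> A B AB FA i Di; have iF := DF i Di; apply: filterS AB (FA i Di).
Qed.

(* The filter generated by [F] and the sets [shiftset p A] for [r A]: its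
   ultrafilter extensions are the [q] in [ultra_ext F] with [r `<=` q + p]. *)
Definition shift_meet (F r p : set_system nat) : set_system nat :=
  [set X | exists B A, [/\ F B, r A & B `&` shiftset p A `<=` X]].

Lemma shift_meet_filter F r p :
  Filter F -> Filter r -> Filter p -> Filter (shift_meet F r p).
Proof.
move=> FF rF pF; split.
- by exists setT, setT; split=> //; apply: filterT.
- move=> X Y [B1 [A1 [FB1 rA1 sX]]] [B2 [A2 [FB2 rA2 sY]]].
  exists (B1 `&` B2), (A1 `&` A2); split; [exact: filterI|exact: filterI|].
  move=> n [[B1n B2n] An]; split; [apply: sX|apply: sY]; split=> //;
    by apply: shiftsetS An => m [].
- move=> X Y XY [B [A [FB rA sX]]]; exists B, A; split=> //.
  exact: subset_trans XY.
Qed.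

Lemma sub_shift_meet F r p : Filter r -> F `<=` shift_meet F r p.
Proof. by move=> rF B FB; exists B, setT; split=> //; apply: filterT. Qed.

Lemma shift_meet_sub F r p q : Filter q -> F `<=` q -> r `<=` ultra_add q p ->
  shift_meet F r p `<=` q.
Proof.
by move=> qF Fq rqp X [B [A [FB /rqp qA sX]]]; apply: filterS sX (filterI (Fq _ FB) qA).
Qed.

Lemma shift_meet_ultra_add F r p q : Filter F -> shift_meet F r p `<=` q ->
  r `<=` ultra_add q p.
Proof.
by move=> FF Fq A rA; apply: Fq; exists setT, A; split=> //; apply: filterT.
Qed.

(* The right translate [ultra_ext F + p] is closed. *)
Lemma ultra_add_closed F p r : ProperFilter F -> UltraFilter p -> UltraFilter r ->
  (forall A, (forall q, ultra_ext F q -> ultra_add q p A) -> r A) ->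
  exists2 q, ultra_ext F q & r = ultra_add q p.
Proof.
move=> FF pU rU rcl.
have Fr_proper : ProperFilter (shift_meet F r p).
  apply: Build_ProperFilter; last exact: shift_meet_filter.
  move=> [B [A [FB rA sB]]]; apply: proper_filter_setC ultra_proper rA _.
  apply: rcl => q [qU Fq]; rewrite /ultra_add /= shiftsetC //.
  by apply: filterS (Fq _ FB) => n Bn shA; apply: (sB n).
have [q [qU Fq]] := ultraFilterLemma Fr_proper.
exists q; first by split=> //; apply: subset_trans Fq; apply: sub_shift_meet.
apply/esym/max_filter; first exact: @ultra_proper _ _ (ultra_add_ultra qU pU).
exact: shift_meet_ultra_add Fq.
Qed.

Section MinimalSemigroup.
Variable F : set_system nat.
Hypothesis Fsg : semigroup_filter F.
Hypothesis Fmin : forall G, semigroup_filter G -> F `<=` G -> G `<=` F.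

Lemma ultra_ext_add q r : ultra_ext F q -> ultra_ext F r -> ultra_ext F (ultra_add q r).
Proof.
have [_ _ Fadd] := Fsg; move=> [qU Fq] [rU Fr].
by split; [exact: ultra_add_ultra|exact: Fadd].
Qed.

(* [ultra_ext F + p] is a closed subsemigroup of [ultra_ext F], hence equal to it
   by minimality. *)
Lemma ultra_ext_left_unit p : ultra_ext F p -> exists2 q, ultra_ext F q & ultra_add q p = p.
Proof.
move=> [pU Fp]; have [FF Foo Fadd] := Fsg.
pose F' := [set A | forall q, ultra_ext F q -> ultra_add q p A].
have FF' : F `<=` F' by move=> A FA q Fq; apply: Fadd.
have F'sg : semigroup_filter F'.
  split; [|exact: subset_trans Foo FF'|].
    apply: proper_filter_bigcap; first by exists p.
    by move=> q [qU _]; exact: @ultra_proper _ _ (ultra_add_ultra qU pU).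
  move=> r1 r2 [r1U F'r1] [r2U F'r2].
  have [q1 Fq1 ->] := ultra_add_closed FF pU r1U F'r1.
  have [q2 Fq2 ->] := ultra_add_closed FF pU r2U F'r2.
  move=> A F'A; rewrite -ultra_addA; apply: F'A.
  by do 2 apply: ultra_ext_add => //.
have [q Fq pq] : exists2 q, ultra_ext F q & p = ultra_add q p.
  by apply: ultra_add_closed => // A /(Fmin F'sg FF') /Fp.
by exists q.
Qed.

(* The [q] in [ultra_ext F] with [q + p = p] form a closed subsemigroup, which
   is nonempty by [ultra_ext_left_unit], hence contains [p]. *)
Lemma ultra_ext_idempotent p : ultra_ext F p -> ultra_add p p = p.
Proof.
move=> Fp; have [pU Fp'] := Fp; have [FF Foo _] := Fsg.
pose F'' := shift_meet F p p.
have fixed q : ultra_ext F'' q -> ultra_ext F q /\ ultra_add q p = p.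
  move=> [qU F''q]; split; first by split=> //; apply: subset_trans F''q; exact: sub_shift_meet.
  apply: max_filter; first exact: @ultra_proper _ _ (ultra_add_ultra qU pU).
  exact: shift_meet_ultra_add F''q.
have F''sg : semigroup_filter F''.
  split; [|by apply: subset_trans Foo _; exact: sub_shift_meet|].
    apply: Build_ProperFilter; last exact: shift_meet_filter.
    have [q0 [q0U Fq0] q0p] := ultra_ext_left_unit Fp.
    have F''q0 : F'' `<=` q0 by apply: shift_meet_sub Fq0 _; rewrite q0p.
    by move=> /F''q0 /filter_not_empty.
  move=> q1 q2 /fixed[Fq1 q1p] /fixed[Fq2 q2p].
  have [q12U Fq12] := ultra_ext_add Fq1 Fq2.
  by apply: shift_meet_sub Fq12 _; rewrite ultra_addA q2p q1p.
have F''F : F'' `<=` F by apply: Fmin F''sg _; exact: sub_shift_meet.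
by have [|_ //] := fixed p; split=> //; apply: subset_trans F''F Fp'.
Qed.

End MinimalSemigroup.

Lemma exists_idempotent_ultrafilter :
  exists p, [/\ UltraFilter p, \oo `<=` p & ultra_add p p = p].
Proof.
have [F [Fsg Fmin]] := maximal_semigroup_filter; have [FF Foo _] := Fsg.
have [p [pU Fp]] := ultraFilterLemma FF.
exists p; split=> //; first exact: subset_trans Foo Fp.
exact: ultra_ext_idempotent Fsg Fmin _ (conj pU Fp).
Qed.

Local Open Scope ring_scope.

(** * Finitely additive probability functionals *)

Section Probability.
Variables (R : realType) (S : Type).
Implicit Types (mu : (S -> R) -> R) (f g : S -> R).

Lemma bnd_cst (a : R) : bnd (fun _ : S => a).
Proof. by exists `|a|. Qed.

Lemma bnd_lin (a : R) f g : bnd f -> bnd g -> bnd (fun x => a * f x + g x).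
Proof.
move=> [M fM] [N gN]; exists (`|a| * M + N) => x.
by apply: le_trans (ler_normD _ _) _; rewrite normrM lerD ?ler_wpM2l.
Qed.

Lemma prob_lin mu (a : R) f g : is_prob mu -> bnd f -> bnd g ->
  mu (fun x => a * f x + g x) = a * mu f + mu g.
Proof. by case=> _ + _ _; apply. Qed.

Lemma prob_cst mu (a : R) : is_prob mu -> mu (fun _ => a) = a.
Proof.
move=> mup; have [_ _ _ mu1] := mup.
have mu0 : mu (fun _ => 0) = 0.
  have := prob_lin 1 mup (bnd_cst 0) (bnd_cst 0).
  under eq_fun do rewrite mulr0 addr0.
  by rewrite mul1r; lra.
have := prob_lin a mup (bnd_cst 1) (bnd_cst 0).
by under eq_fun do rewrite mulr1 addr0; rewrite mu1 mu0 mulr1 addr0.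
Qed.

Lemma prob_ge0 mu f : is_prob mu -> (forall x, 0 <= f x) -> 0 <= mu f.
Proof.
case=> unb _ pos _ f0; have [bf|nbf] := pselect (bnd f); first exact: pos.
by rewrite unb.
Qed.

Lemma prob_norm_le mu f M : is_prob mu -> (forall x, `|f x| <= M) -> `|mu f| <= M.
Proof.
move=> mup fM; have bf : bnd f by exists M.
have fM' x : - M <= f x <= M by rewrite -ler_norml.
have le0 (a : R) : (forall x, 0 <= a * f x + M) -> 0 <= a * mu f + M.
  by move=> /(prob_ge0 mup); rewrite prob_lin ?prob_cst //; exact: bnd_cst.
have := le0 1 (fun x => ltac:(have /andP[] := fM' x; lra)).
have := le0 (-1) (fun x => ltac:(have /andP[] := fM' x; lra)).
by rewrite ler_norml; lra.
Qed.

End Probability.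

(** * Integrating a function of a tree over some of its leaves *)

Lemma leaves_gt0 t : (0 < leaves t)%N.
Proof. by elim: t => //= a IHa b _; rewrite addn_gt0 IHa. Qed.

Lemma leaves_tk t k : (k < leaves t)%N -> (k < leaves (tk t k))%N.
Proof.
elim: t k => [|a IHa b IHb] k //= kt; case: ifP => ka /=; first by have := IHa _ ka; lia.
by have := IHb (k - leaves a)%N ltac:(lia); lia.
Qed.

Section TreeIntegral.
Variables (R : realType) (mu : (tree -> R) -> R).

(* [tree_integral t us f] is the integral of [f (subst t (us ++ xs))] over the
   leaves [xs] left free by [us], each distributed according to [mu]. *)
Fixpoint tree_integral (t : tree) (us : seq tree) (f : tree -> R) : R :=
  match t with
  | Leaf => if us is u :: _ then f u else mu f
  | Node a b => tree_integral a (take (leaves a) us)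
      (fun x => tree_integral b (drop (leaves a) us) (fun y => f (Node x y)))
  end.

Lemma tree_integral_subst t us f : size us = leaves t ->
  tree_integral t us f = f (subst t us).
Proof.
elim: t us f => [|a IHa b IHb] us f /=; first by case: us => [|u [|? ?]].
move=> usz; rewrite IHa; last by rewrite size_takel // usz leq_addr.
by rewrite IHb // size_drop usz addKn.
Qed.

Lemma tree_integral_rcons t us f : (size us < leaves t)%N ->
  tree_integral t us f = mu (fun v => tree_integral t (rcons us v) f).
Proof.
elim: t us f => [|a IHa b IHb] us f /=; first by case: us.
move=> ust; have [usa|aus] := ltnP (size us) (leaves a).
  rewrite take_oversize ?drop_oversize 1?ltnW // IHa //.
  by congr (mu _); apply/funext => v; rewrite take_oversize ?drop_oversize ?size_rcons.
rewrite tree_integral_subst ?size_takel // IHb; last first.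
  by rewrite size_drop -(ltn_add2l (leaves a)) subnKC.
congr (mu _); apply/funext => v.
rewrite -[rcons us v]cats1 takel_cat // cats1 drop_rcons // (@tree_integral_subst a) //.
by rewrite size_takel.
Qed.

Hypothesis mup : is_prob mu.

Lemma tree_integral_norm_le t us f M :
  (forall x, `|f x| <= M) -> `|tree_integral t us f| <= M.
Proof.
elim: t us f => [|a IHa b IHb] us f fM /=; last by apply: IHa => x; apply: IHb.
by case: us => [|u ?]; [exact: prob_norm_le|exact: fM].
Qed.

Hypothesis mu_idem : bconv Node mu mu = mu.

Lemma tree_integral_nil t f : bnd f -> tree_integral t [::] f = mu f.
Proof.
elim: t f => [|a IHa b IHb] f [M fM] //=.
rewrite (eq_fun (fun x => IHb _ _)); last by exists M.
rewrite IHa; last by exists M => x; exact: prob_norm_le.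
transitivity (bconv Node mu mu f); last by rewrite mu_idem.
by rewrite /bconv asboolT //; exists M.
Qed.

(* Once the leaves up to [k] are fixed, the rest of [t] can be collapsed into
   [tk t k], because [mu] is idempotent. *)
Lemma tree_integral_tk t k us f : bnd f -> size us = k.+1 -> (k < leaves t)%N ->
  tree_integral t us f = tree_integral (tk t k) us f.
Proof.
elim: t k us f => [|a IHa b IHb] k us f [M fM] usz //= kt.
case: ifP => ka /=.
  have kak := leaves_tk ka.
  rewrite !take_oversize ?drop_oversize ?usz // -IHa //; last first.
    by exists M => x; exact: prob_norm_le.
  by congr (tree_integral a us _); apply/funext => x; apply: tree_integral_nil; exists M.
congr (tree_integral a _ _); apply/funext => x; apply: IHb; first by exists M.
  by rewrite size_drop usz; lia.
by move: kt; rewrite /=; lia.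
Qed.

End TreeIntegral.

(** * Limits of finitely supported measures along an ultrafilter *)

Lemma In_mem (T : eqType) (x : T) (s : seq T) : x \in s -> List.In x s.
Proof. by elim: s => //= y s IH; rewrite inE => /orP[/eqP->|/IH]; [left|right]. Qed.

Lemma In_allpairs (A : Type) (B : eqType) (C : Type) (f : A -> B -> C)
    (s : seq A) (t : seq B) a b :
  List.In a s -> b \in t -> List.In (f a b) [seq f x y | x <- s, y <- t].
Proof.
move=> + /In_mem tb; elim: s => //= x s IH [->|sa]; apply: List.in_or_app.
  by left; exact: List.in_map.
by right; apply: IH.
Qed.

Lemma wsum_norm_le (R : realType) (T : eqType) (rho : seq (T * R)) (h : T -> R) M :
  (forall x, x \in rho -> 0 <= x.2) -> \sum_(x <- rho) x.2 = 1 ->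
  (forall x, x \in rho -> `|h x.1| <= M) -> `|\sum_(x <- rho) x.2 * h x.1| <= M.
Proof.
move=> w0 w1 hM; apply: le_trans (ler_norm_sum _ _ _) _.
rewrite -[M]mul1r -w1 mulr_suml big_seq_cond [X in _ <= X]big_seq_cond.
apply: ler_sum => x /andP[xr _].
by rewrite normrM ger0_norm ?w0 // ler_wpM2l ?w0 ?hM.
Qed.

Section FiniteMeasures.
Variable R : realType.
Implicit Types (rho sig : fmeas R) (f g : tree -> R).

Definition fmeas_fun rho : (tree -> R) -> R :=
  fun f => if `[< bnd f >] then \sum_(x <- rho) x.2 * f x.1 else 0.

Lemma fmeas_funE rho f : bnd f -> fmeas_fun rho f = \sum_(x <- rho) x.2 * f x.1.
Proof. by rewrite /fmeas_fun => /asboolP ->. Qed.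

Lemma fmeas_fun_prob n rho : inA n rho -> is_prob (fmeas_fun rho).
Proof.
case=> _ w0 w1; split.
- by move=> f /asboolPn; rewrite /fmeas_fun => /negbTE ->.
- move=> a f g bf bg; rewrite !fmeas_funE //; last exact: bnd_lin.
  by rewrite mulr_sumr -big_split; apply: eq_bigr => x _; rewrite mulrDr mulrCA.
- move=> f bf f0; rewrite fmeas_funE // big_seq; apply: sumr_ge0 => x xr.
  by rewrite mulr_ge0 ?w0.
- by rewrite fmeas_funE; [under eq_bigr do rewrite mulr1 | exact: bnd_cst].
Qed.

Definition fmeas_mix (t : R) rho sig : fmeas R :=
  [seq (x.1, t * x.2) | x <- rho] ++ [seq (x.1, (1 - t) * x.2) | x <- sig].

Lemma inA_mix n t rho sig : 0 <= t <= 1 -> inA n rho -> inA n sig ->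
  inA n (fmeas_mix t rho sig).
Proof.
move=> /andP[t0 t1] [l1 w1 s1] [l2 w2 s2]; split.
- by move=> x; rewrite mem_cat => /orP[] /mapP[y yin ->]; [exact: l1 yin|exact: l2 yin].
- move=> x; rewrite mem_cat => /orP[] /mapP[y yin ->] /=.
    by rewrite mulr_ge0 ?w1.
  by rewrite mulr_ge0 ?w2 ?subr_ge0.
- by rewrite big_cat !big_map /= -!mulr_sumr s1 s2; lra.
Qed.

Lemma fmeas_fun_mix t rho sig f :
  fmeas_fun (fmeas_mix t rho sig) f = t * fmeas_fun rho f + (1 - t) * fmeas_fun sig f.
Proof.
rewrite /fmeas_fun; case: asboolP => _; last by rewrite !mulr0 addr0.
rewrite big_cat !big_map !mulr_sumr; congr (_ + _); apply: eq_bigr => x _; by rewrite mulrA.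
Qed.

Definition fmeas_node rho sig : fmeas R :=
  [seq (Node x.1 y.1, x.2 * y.2) | x <- rho, y <- sig].

Lemma inA_node n m rho sig : inA n rho -> inA m sig -> inA (n + m) (fmeas_node rho sig).
Proof.
move=> [l1 w1 s1] [l2 w2 s2]; split.
- by move=> x /allpairsP[[a b] [ain bin ->]] /=; rewrite l1 // l2.
- move=> x /allpairsP[[a b] [ain bin ->]] /=; apply: mulr_ge0; [exact: w1|exact: w2].
- rewrite big_allpairs_dep /= -s1.
  by apply: eq_bigr => a _; rewrite -mulr_sumr s2 mulr1.
Qed.

Lemma fmeas_fun_node rho sig g : bnd g ->
  fmeas_fun (fmeas_node rho sig) g =
  \sum_(x <- rho) x.2 * fmeas_fun sig (fun v => g (Node x.1 v)).
Proof.
move=> [M gM]; rewrite fmeas_funE; last by exists M.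
rewrite big_allpairs_dep; apply: eq_bigr => a _; rewrite fmeas_funE; last by exists M.
by rewrite mulr_sumr; apply: eq_bigr => b _; rewrite mulrA.
Qed.

Definition fmeas_dirac (t : tree) : fmeas R := [:: (t, 1)].

Lemma inA_fmeas_dirac t : inA (leaves t) (fmeas_dirac t).
Proof. by split=> [x|x|]; rewrite ?big_seq1 // inE => /eqP ->. Qed.

End FiniteMeasures.

Fixpoint comb (n : nat) : tree := if n is n'.+1 then Node Leaf (comb n') else Leaf.

Lemma leaves_comb n : leaves (comb n) = n.+1.
Proof. by elim: n => //= n ->. Qed.

Section WeakStar.
Variables (R : realType) (S : Type).
Local Notation weak := (prod_topology (fun _ : S -> R => (R : topologicalType))).

(* [bound f] is a bound of [|f|] when [f] is bounded (junk otherwise). *)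
Definition bound (f : S -> R) : R := xget 0 [set M : R | forall x, `|f x| <= M].

Definition prob_box : set ((S -> R) -> R) :=
  [set y | forall f, `[- bound f, bound f]%classic (y f)].

Lemma prob_box_compact : wcompact prob_box.
Proof.
have := @tychonoff (S -> R : eqType) (fun _ => (R : topologicalType))
  (fun f => `[- bound f, bound f]%classic).
by move=> /(_ (fun f => @segment_compact R _ _)).
Qed.

Lemma prob_in_box y : is_prob y -> prob_box y.
Proof.
move=> yp f; have [unb _ _ _] := yp; have [bf|nbf] := pselect (bnd f).
  have := prob_norm_le yp (xgetPex 0 bf : forall x, `|f x| <= bound f).
  by rewrite ler_norml /= in_itv /=.
rewrite unb //= /bound xgetPN; first by rewrite in_itv /= oppr0 lexx.
by move=> M fM; apply: nbf; exists M.
Qed.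

Lemma nbhs_coords (y : (S -> R) -> R) (G : seq (S -> R)) (d : R) : 0 < d ->
  @nbhs _ weak y [set y' | forall g, List.In g G -> `|y' g - y g| < d].
Proof.
move=> d0; have yF : Filter (@nbhs _ weak y) by exact: nbhs_pfilter.
elim: G => [|g G IH]; first by apply: filterE => y' g [].
have yg : @nbhs _ weak y [set y' | `|y' g - y g| < d].
  have -> : [set y' : (S -> R) -> R | `|y' g - y g| < d] = proj g @^-1` ball (y g) d.
    by apply/funext => y'; rewrite /= -ball_normE /ball_ /= distrC.
  exact: (@proj_continuous (S -> R : eqType) (fun _ => (R : topologicalType)) g y
    _ (nbhsx_ballx _ _ d0)).
by apply: filterS (filterI yg IH) => y' [y'g y'G] g' [<-|/y'G].
Qed.

End WeakStar.

Lemma eq_approx (R : realFieldType) (x y k : R) :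
  (forall d, 0 < d -> `|x - y| <= k * d) -> x = y.
Proof.
move=> xy; apply/eqP; rewrite -subr_eq0 -normr_le0; apply/ler_addgt0Pr => e e0.
have k1 : 0 < `|k| + 1 by rewrite ltr_pwDr ?normr_ge0.
apply: le_trans (xy _ (divr_gt0 e0 k1)) _; rewrite add0r mulrA ler_pdivrMr //.
by rewrite [k * e]mulrC ler_wpM2l ?(ltW e0) // (le_trans (ler_norm _)) ?lerDl.
Qed.

Section UltraLimits.
Variables (R : realType) (p : set_system nat).
Hypotheses (pU : UltraFilter p) (poo : \oo `<=` p).
Local Notation weak := (prod_topology (fun _ : tree -> R => (R : topologicalType))).

Definition close_on (y z : (tree -> R) -> R) (G : seq (tree -> R)) (d : R) : Prop :=
  forall g, List.In g G -> `|z g - y g| < d.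

Definition approx_set y G d : set nat :=
  [set n | exists2 rho, inA n rho & close_on y (fmeas_fun rho) G d].

(* Limits along [p] of elements of [A_n], in the weak* topology. *)
Definition plim : set ((tree -> R) -> R) :=
  [set y | forall G d, 0 < d -> p (approx_set y G d)].

Lemma plim_approx y G d : plim y -> 0 < d ->
  exists n rho, inA n rho /\ close_on y (fmeas_fun rho) G d.
Proof. by move=> py d0; have [n [rho]] := filter_ex (py G d d0); exists n, rho. Qed.

Lemma plim_prob y : plim y -> is_prob y.
Proof.
move=> py; split.
- move=> f nbf; apply: (@eq_approx _ _ _ 1) => d d0.
  have [n [rho [_ yf]]] := plim_approx [:: f] py d0.
  have := yf f (List.in_eq _ _); rewrite /fmeas_fun asboolF //.
  by rewrite sub0r normrN subr0 mul1r => /ltW.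
- move=> a f g bf bg; apply: (@eq_approx _ _ _ (`|a| + 2)) => d d0.
  set h := fun x => a * f x + g x.
  have [n [rho [rhoA yfg]]] := plim_approx [:: h; f; g] py d0.
  have [_ lin _ _] := fmeas_fun_prob rhoA.
  have yh := yfg h (List.in_eq _ _); rewrite distrC in yh.
  have yf := yfg f ltac:(by right; left).
  have yg := yfg g ltac:(by right; right; left).
  have -> : y h - (a * y f + y g) = y h - fmeas_fun rho h + a * (fmeas_fun rho f - y f)
      + (fmeas_fun rho g - y g) by rewrite lin //; ring.
  have af : `|a * (fmeas_fun rho f - y f)| <= `|a| * d.
    by rewrite normrM ler_wpM2l // ltW.
  apply: le_trans (ler_normD _ _) _; apply: le_trans (lerD (ler_normD _ _) (lexx _)) _; lra.
- move=> f bf f0; apply/ler_addgt0Pr => d d0.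
  have [n [rho [rhoA yf]]] := plim_approx [:: f] py d0.
  have := yf f (List.in_eq _ _); have := prob_ge0 (fmeas_fun_prob rhoA) f0.
  by rewrite ltr_norml; lra.
- apply: (@eq_approx _ _ _ 1) => d d0.
  have [n [rho [rhoA y1]]] := plim_approx [:: fun=> 1] py d0.
  have := y1 _ (List.in_eq _ _); rewrite (prob_cst _ (fmeas_fun_prob rhoA)).
  by rewrite mul1r distrC => /ltW.
Qed.

Lemma plim_convex : wconvex plim.
Proof.
move=> y z t py pz /andP[t0 t1] G d d0; have d20 : 0 < d / 2 by rewrite divr_gt0.
apply: filterS (filterI (py G _ d20) (pz G _ d20)) => n [[rho rhoA yrho] [sig sigA zsig]].
exists (fmeas_mix t rho sig); first by apply: inA_mix; rewrite ?t0.
move=> g Gg; rewrite fmeas_fun_mix.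
have -> : t * fmeas_fun rho g + (1 - t) * fmeas_fun sig g - (t * y g + (1 - t) * z g) =
   t * (fmeas_fun rho g - y g) + (1 - t) * (fmeas_fun sig g - z g) by ring.
have t1' : 0 <= 1 - t by rewrite subr_ge0.
apply: le_lt_trans (ler_normD _ _) _; rewrite !normrM (ger0_norm t0) (ger0_norm t1').
have e1 := ler_wpM2l t0 (ltW (yrho g Gg)).
have e2 := ler_wpM2l t1' (ltW (zsig g Gg)).
have : t * (d / 2) + (1 - t) * (d / 2) = d / 2 by ring.
have := splitr d; lra.
Qed.

Lemma plim_closed : @closed weak plim.
Proof.
move=> y yclo G d d0; have d20 : 0 < d / 2 by rewrite divr_gt0.
have [z [pz zy]] := yclo _ (nbhs_coords y G d20).
apply: filterS (pz G _ d20) => n [rho rhoA zrho]; exists rho => // g Gg.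
have := zrho g Gg; have := zy g Gg.
have -> : fmeas_fun rho g - y g = (fmeas_fun rho g - z g) + (z g - y g) by ring.
move=> h1 h2; apply: le_lt_trans (ler_normD _ _) _; have := splitr d; lra.
Qed.

Lemma plim_compact : wcompact plim.
Proof.
apply: (@subclosed_compact weak plim _ plim_closed (@prob_box_compact R tree)).
by move=> y /plim_prob /prob_in_box.
Qed.

Lemma plim_nonempty : plim !=set0.
Proof.
pose dn n := fmeas_fun (@fmeas_dirac R (comb n.-1)).
have dnA n : (0 < n)%N -> inA n (@fmeas_dirac R (comb n.-1)).
  by move=> n0; rewrite -[X in inA X]prednK // -leaves_comb; exact: inA_fmeas_dirac.
have pos : p [set n | (0 < n)%N] by apply: poo; exists 1%N.
have box_dn : p [set n | @prob_box R tree (dn n)].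
  by apply: filterS pos => n /dnA /fmeas_fun_prob /prob_in_box.
have [y [_ ycl]] := @prob_box_compact R tree (dn @ p) _ box_dn.
exists y => G d d0.
have pQ : p [set n | close_on y (dn n) G d].
  have [//|pnQ] := in_ultra_setVsetC [set n | close_on y (dn n) G d] pU.
  by have [z []] := ycl [set z | ~ close_on y z G d] _ pnQ (nbhs_coords y G d0).
by apply: filterS (filterI pQ pos) => n [Qn n0]; exists (fmeas_dirac R (comb n.-1)); [exact: dnA|].
Qed.

Hypothesis p_idem : ultra_add p p = p.

Lemma plim_bconv y z : plim y -> plim z -> plim (bconv Node y z).
Proof.
move=> py pz G d d0; have zP := plim_prob pz; have d20 : 0 < d / 2 by rewrite divr_gt0.
pose zG := [seq (fun x => z (fun v => g (Node x v))) | g <- G].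
rewrite -p_idem; apply: filterS (py zG _ d20) => n [rho rhoA yrho].
pose Grho := [seq (fun v => g (Node x.1 v)) | g <- G, x <- rho].
apply: filterS (pz Grho _ d20) => m [sig sigA zsig].
exists (fmeas_node rho sig); first exact: inA_node.
move=> g Gg; have [[M gM]|nbg] := pselect (bnd g); last first.
  by rewrite /fmeas_fun /bconv !asboolF // subrr normr0.
have gx_bnd x : bnd (fun v => g (Node x v)) by exists M.
have zg_bnd : bnd (fun x => z (fun v => g (Node x v))).
  by exists M => x; exact: prob_norm_le.
rewrite fmeas_fun_node; last by exists M.
rewrite /bconv asboolT; last by exists M.
have := yrho _ (List.in_map (fun g => fun x => z (fun v => g (Node x v))) _ _ Gg).
rewrite fmeas_funE // => yg.
have zg : `|\sum_(x <- rho) x.2 * (fmeas_fun sig (fun v => g (Node x.1 v))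
                                   - z (fun v => g (Node x.1 v)))| <= d / 2.
  have [_ w0 w1] := rhoA.
  apply: (wsum_norm_le (h := fun u => fmeas_fun sig (fun v => g (Node u v))
                                     - z (fun v => g (Node u v)))) => // x xrho.
  exact/ltW/zsig/(In_allpairs (fun g x => fun v => g (Node x.1 v)) Gg xrho).
set zrho := \sum_(x <- rho) x.2 * z (fun v => g (Node x.1 v)) in yg *.
have -> : \sum_(x <- rho) x.2 * fmeas_fun sig (fun v => g (Node x.1 v))
    - y (fun x => z (fun v => g (Node x v))) =
  \sum_(x <- rho) x.2 * (fmeas_fun sig (fun v => g (Node x.1 v))
                        - z (fun v => g (Node x.1 v)))
  + (zrho - y (fun x => z (fun v => g (Node x v)))).
  by rewrite addrA /zrho -big_split /=; congr (_ - _); apply: eq_bigr => x _; ring.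
by apply: le_lt_trans (ler_normD _ _) _; have := splitr d; lra.
Qed.

End UltraLimits.

(** * The approximating sequence *)

Fixpoint trees (n : nat) : seq tree :=
  if n is n'.+1 then Leaf :: [seq Node a b | a <- trees n', b <- trees n'] else [:: Leaf].

Lemma mem_trees t n : (leaves t <= n.+1)%N -> t \in trees n.
Proof.
elim: t n => [|a IHa b IHb] [|n] /=; rewrite ?inE ?eqxx //.
  by have := leaves_gt0 a; have := leaves_gt0 b; lia.
have := leaves_gt0 a; have := leaves_gt0 b => ? ? ?.
by rewrite allpairs_f ?orbT // ?IHa ?IHb //; lia.
Qed.

Fixpoint lists (T : Type) (s : seq T) (n : nat) : seq (seq T) :=
  if n is n'.+1 then [::] :: [seq x :: l | x <- s, l <- lists s n'] else [:: [::]].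

Lemma mem_lists (T : eqType) (s us : seq T) n : (size us <= n)%N ->
  {subset us <= s} -> us \in lists s n.
Proof.
elim: us n => [|u us IH] [|n] //= usn uss; rewrite inE ?eqxx //.
by rewrite allpairs_f ?orbT ?uss ?mem_head // IH // => v vus; rewrite uss // inE vus orbT.
Qed.

Lemma sum_geometric_lt (R : realFieldType) (ix : seq nat) a :
  sorted ltn ix -> {in ix, forall i, (a <= i)%N} ->
  \sum_(i <- ix) (2^-1 : R) ^+ i.+1 < 2^-1 ^+ a.
Proof.
elim: ix a => [|i ix IH] a /=; first by rewrite big_nil exprn_gt0.
move=> ixs aix; rewrite big_cons.
have ai : (a <= i)%N by apply: aix; rewrite mem_head.
have := IH i.+1 (path_sorted ixs) (allP (order_path_min ltn_trans ixs)).
have : (2^-1 : R) ^+ i.+1 + 2^-1 ^+ i.+1 = 2^-1 ^+ i.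
  have := splitr (1 : R); rewrite mul1r => h2.
  by rewrite exprS -mulrDl -h2 mul1r.
have : (2^-1 : R) ^+ i <= 2^-1 ^+ a by rewrite ler_wiXn2l // ltW // invf_lt1 // ltr1n.
lra.
Qed.

Lemma choice_with_history (T : Type) (P : seq T -> T -> Prop) :
  (forall h, exists x, P h x) -> exists e : nat -> T, forall i, P (mkseq e i) (e i).
Proof.
move=> /choice[f Pf]; pose hist i := iter i (fun h => rcons h (f h)) [::].
exists (fun i => f (hist i)) => i; suff -> : mkseq (fun j => f (hist j)) i = hist i by [].
by elim: i => // i IH; rewrite mkseqS IH.
Qed.

Section Estimate.
Variables (R : realType) (mu : (tree -> R) -> R) (c : tree -> R).
Hypotheses (mup : is_prob mu) (mu_idem : bconv Node mu mu = mu).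
Hypothesis c_le1 : forall t, `|c t| <= 1.

Fixpoint mixed_integral (t : tree) (us : seq tree) (ls : seq (fmeas R)) : R :=
  if ls is nu :: ls' then \sum_(x <- nu) x.2 * mixed_integral t (rcons us x.1) ls'
  else tree_integral mu t us c.

Lemma mixed_integralE t us ls : mixed_integral t us ls =
  \sum_(q <- choices ls) q.2 * tree_integral mu t (us ++ q.1) c.
Proof.
elim: ls us => [|nu ls IH] us /=; first by rewrite big_seq1 mul1r cats0.
rewrite big_allpairs_dep; apply: eq_bigr => x _.
by rewrite IH mulr_sumr; apply: eq_bigr => q _; rewrite cat_rcons mulrA.
Qed.

Lemma size_choices (ls : seq (fmeas R)) q : q \in choices ls -> size q.1 = size ls.
Proof.
elim: ls q => [|nu ls IH] q /=; first by rewrite inE => /eqP ->.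
by move=> /allpairsPdep[x [q' [_ q'ls ->]]] /=; rewrite IH.
Qed.

Lemma cA_tsubst t ls : size ls = leaves t -> cA c (tsubst t ls) = mixed_integral t [::] ls.
Proof.
move=> lst; rewrite mixed_integralE /cA /tsubst big_map big_seq [RHS]big_seq.
by apply: eq_bigr => q qls; rewrite tree_integral_subst // (size_choices qls).
Qed.

Variables (nus : nat -> fmeas R) (sz : nat -> nat) (supp : nat -> seq tree) (dl : nat -> R).
Hypothesis nusA : forall i, inA (sz i) (nus i).
Hypothesis supp_nus : forall i j x, (i < j)%N -> x \in nus i -> x.1 \in supp j.
Hypothesis nus_approx : forall i s us, s \in trees i.+1 -> us \in lists (supp i) i ->
  `|fmeas_fun (nus i) (fun v => tree_integral mu s (rcons us v) c)
    - mu (fun v => tree_integral mu s (rcons us v) c)| < dl i.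

(* Each step replaces [mu] by [nus i] at the next free leaf, at a cost of at
   most [dl i]: by [tree_integral_tk] the function integrated there is built
   from [tk t k], which has at most [i + 2] leaves by admissibility, so it is
   one of the functions that [nus i] approximates. *)
Lemma mixed_integral_err t ix us : sorted ltn ix -> (size us + size ix)%N = leaves t ->
  (forall j, (j < size ix)%N -> lk t (size us + j) <= (nth 0%N ix j)%:Z) ->
  (forall i, i \in ix -> (size us <= i)%N /\ {subset us <= supp i}) ->
  `|mixed_integral t us (map nus ix) - tree_integral mu t us c| <= \sum_(i <- ix) dl i.
Proof.
have c_bnd : bnd c by exists 1.
elim: ix us => [|i ix IH] us /=; first by rewrite subrr normr0 big_nil.
move=> ixs ust lk_ix ix_supp; rewrite big_cons.
have kt : (size us < leaves t)%N by rewrite -ust addnS ltnS leq_addr.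
pose g v := tree_integral mu t (rcons us v) c.
have g_tk : g = fun v => tree_integral mu (tk t (size us)) (rcons us v) c.
  by apply/funext => v; apply: tree_integral_tk; rewrite ?size_rcons.
have [usi us_supp] := ix_supp i (mem_head _ _).
have tk_trees : tk t (size us) \in trees i.+1.
  by apply: mem_trees; have := lk_ix 0%N isT; rewrite addn0 /lk /=; lia.
have := nus_approx tk_trees (mem_lists usi us_supp); rewrite -g_tk => err_i.
have g_bnd : bnd g by exists 1 => v; exact: tree_integral_norm_le.
have [_ w0 w1] := nusA i.
rewrite (tree_integral_rcons _ _ kt) -/g.
have -> : \sum_(x <- nus i) x.2 * mixed_integral t (rcons us x.1) (map nus ix) - mu g =
    \sum_(x <- nus i) x.2 * (mixed_integral t (rcons us x.1) (map nus ix) - g x.1) +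
    (fmeas_fun (nus i) g - mu g).
  rewrite fmeas_funE // addrA; congr (_ - _); rewrite -big_split /=.
  by apply: eq_bigr => x _; ring.
apply: le_trans (ler_normD _ _) _; rewrite addrC lerD ?(ltW err_i) //.
apply: (wsum_norm_le (h := fun u => mixed_integral t (rcons us u) (map nus ix) - g u)) => // x xi.
apply: IH; rewrite ?size_rcons ?addSnnS //; first exact: path_sorted ixs.
  by move=> j jix; rewrite addSnnS; exact: (lk_ix j.+1).
move=> i' i'ix; have ii' : (i < i')%N := allP (order_path_min ltn_trans ixs) _ i'ix.
have [usi' us_supp'] := ix_supp i' (@mem_behead _ (i :: ix) _ i'ix).
split; first exact: leq_ltn_trans usi ii'.
by move=> u; rewrite mem_rcons inE => /orP[/eqP->|/us_supp'//]; exact: supp_nus xi.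
Qed.

End Estimate.

Lemma leq_sumn_mem (s : seq nat) x : x \in s -> (x <= sumn s)%N.
Proof.
elim: s => //= y s IH; rewrite inE => /orP[/eqP->|/IH]; first exact: leq_addr.
by move/leq_trans; apply; apply: leq_addl.
Qed.

Section Construction.
Variables (R : realType) (p : set_system nat) (mu : (tree -> R) -> R) (c : tree -> R).
Hypotheses (pU : UltraFilter p) (poo : \oo `<=` p) (pmu : plim p mu).
Hypotheses (mu_idem : bconv Node mu mu = mu) (c_le1 : forall t, `|c t| <= 1).

Definition atoms (h : seq (nat * fmeas R)) : seq tree := [seq x.1 | e <- h, x <- e.2].

(* The measure chosen at step [size h], after the history [h], must approximate
   [mu] on these functions. *)
Definition tests (h : seq (nat * fmeas R)) : seq (tree -> R) :=
  [seq (fun v => tree_integral mu s (rcons us v) c)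
  | s <- trees (size h).+1, us <- lists (atoms h) (size h)].

Lemma exists_next_fmeas h d : 0 < d -> exists e : nat * fmeas R,
  [/\ sumn (map fst h) < e.1, inA e.1 e.2 & close_on mu (fmeas_fun e.2) (tests h) d]%N.
Proof.
move=> d0; have hn : p [set n | sumn (map fst h) < n]%N.
  by apply: poo; exists (sumn (map fst h)).+1.
have [n [[rho rhoA mu_rho] hn']] := filter_ex (filterI (pmu (tests h) d0) hn).
by exists (n, rho).
Qed.

Lemma exists_admissible_approx eps : 0 < eps ->
  exists (nus : nat -> fmeas R) (sz : nat -> nat),
    [/\ forall i, inA (sz i) (nus i), forall i j, (i < j)%N -> (sz i < sz j)%N &
        forall t ix, admissible t ix -> `|cA c (tsubst t (map nus ix)) - mu c| < eps].
Proof.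
move=> eps0; have mup := plim_prob pU pmu.
pose dl i : R := eps * 2^-1 ^+ i.+1.
have dl_gt0 i : 0 < dl i by rewrite mulr_gt0 // exprn_gt0 // invr_gt0.
have [e eP] := choice_with_history (fun h => exists_next_fmeas h (dl_gt0 (size h))).
have e_mem i j : (i < j)%N -> e i \in mkseq e j by move=> ij; rewrite map_f // mem_iota.
have nusA i : inA (e i).1 (e i).2 by have [] := eP i.
exists (fun i => (e i).2), (fun i => (e i).1); split=> //.
  move=> i j /e_mem ei; have [+ _ _] := eP j; apply: leq_ltn_trans.
  exact/leq_sumn_mem/map_f.
have supp_nus i j x : (i < j)%N -> x \in (e i).2 -> x.1 \in atoms (mkseq e j).
  by move=> /e_mem ei xi; apply/allpairsPdep; exists (e i), x.
have nus_approx i s us : s \in trees i.+1 -> us \in lists (atoms (mkseq e i)) i ->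
    `|fmeas_fun (e i).2 (fun v => tree_integral mu s (rcons us v) c)
      - mu (fun v => tree_integral mu s (rcons us v) c)| < dl i.
  have [_ _] := eP i; rewrite /tests size_mkseq => close si usi; apply: close.
  exact: In_allpairs (In_mem si) usi.
move=> t ix [ixt ixs lk_ix]; rewrite (cA_tsubst mu) ?size_map //.
have nothing_fixed i : i \in ix ->
    (0 <= i)%N /\ {subset ([::] : seq tree) <= atoms (mkseq e i)} by [].
have := mixed_integral_err mup mu_idem c_le1 nusA supp_nus nus_approx
  (us := [::]) ixs ixt (fun j jix => lk_ix j (leq_trans jix (eq_leq ixt))).
rewrite tree_integral_nil //; last by exists 1.
move=> /(_ nothing_fixed) /le_lt_trans; apply.
rewrite -mulr_sumr -[ltRHS]mulr1 ltr_pM2l // -(expr0 (2^-1 : R)).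
exact: sum_geometric_lt.
Qed.
End Construction.

Theorem theorem4p1 (R : realType) :
  (forall (S : Type) (op : S -> S -> S) (C : set ((S -> R) -> R)),
      C !=set0 -> wcompact C -> wconvex C -> C `<=` @is_prob R S ->
      (forall mu nu, C mu -> C nu -> C (bconv op mu nu)) ->
      exists2 mu, C mu & bconv op mu mu = mu) ->
  forall (c : tree -> R), (forall t, 0 <= c t <= 1) ->
  forall eps : R, 0 < eps ->
  exists r : R, 0 <= r <= 1 /\
    exists (mu : nat -> fmeas R) (sz : nat -> nat),
      [/\ (forall i, inA (sz i) (mu i)),
          (forall i j, (i < j)%N -> (sz i < sz j)%N)
        & forall (t : tree) (ix : seq nat), admissible t ix ->
            `| cA c (tsubst t (map mu ix)) - r | < eps].
Proof.
move=> idempotent_exists c c01 eps eps0.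
have [p [pU poo p_idem]] := exists_idempotent_ultrafilter.
have [mu pmu mu_idem] := idempotent_exists tree Node (@plim R p)
  (plim_nonempty R pU poo) (plim_compact pU) (plim_convex pU) (plim_prob pU)
  (plim_bconv pU p_idem).
have c_le1 t : `|c t| <= 1 by have /andP[c0 c1] := c01 t; rewrite ger0_norm.
exists (mu c); split; last exact: exists_admissible_approx.
have mup := plim_prob pU pmu.
have := prob_norm_le mup c_le1; rewrite ler_norml => /andP[_ ->].
by rewrite prob_ge0 // => t; have /andP[] := c01 t.
Qed.
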